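(* Let $k,r,h$ be positive integers with $r\mid(k+h)$ and $h\ge 2$. If $C$ is a maximally recoverable local $(k,r,h)$-code defined over the finite field $\mathbb{F}_q$, then $q\ge k+1$.
   Context: A local $(k,r,h)$-code over $\mathbb{F}_q$ (with $r\mid(k+h)$) is a linear systematic code of dimension $k$ and length $k+h+\frac{k+h}{r}$ consisting of $k$ data symbols, $h$ heavy parity symbols (each a fixed $\mathbb{F}_q$-linear combination of all data symbols), and, after partitioning the $k+h$ data and heavy parity symbols into $\frac{k+h}{r}$ groups of size $r$, one local parity per group equal to the sum of the group's symbols. A local group is such a group together with its local parity. The code is maximally recoverable if for every set $E$ of coordinates containing exactly one coordinate from each local group, puncturing the code in $E$ (deleting those coordinates) yields a maximum distance separable $[k+h,k]$ code (minimum distance $h+1$). *)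

From HB Require Import structures.
From mathcomp Require Import all_boot all_order all_algebra.
Set Implicit Arguments. Unset Strict Implicit. Unset Printing Implicit Defensive.
Import GRing.Theory.
Local Open Scope ring_scope.

(* A local (k,r,h)-code over a finite field F is described by
   - Hc : 'M[F]_(h,k): row j gives the coefficients of heavy parity j;
   - g : 'I_(k+h) -> 'I_((k+h) %/ r): the partition of the k+h data and heavy
     parity symbols into (k+h)/r groups (each group must have size r).
   Symbols 0..k-1 of 'I_(k+h) are data symbols, k..k+h-1 heavy parities.
   Coordinates of the code: inl i (data / heavy parity symbol i),
   inr l (local parity of group l); total length k+h+(k+h)/r. *)

Definition coord (k r h : nat) : finType := ('I_(k+h) + 'I_((k+h) %/ r))%type.

Definition sym (F : fieldType) (k h : nat) (Hc : 'M[F]_(h,k)) (x : 'rV[F]_k)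
  (i : 'I_(k+h)) : F :=
  match split i with
  | inl a => x 0 a
  | inr j => \sum_(a < k) Hc j a * x 0 a
  end.

Definition encode (F : fieldType) (k r h : nat) (Hc : 'M[F]_(h,k))
  (g : 'I_(k+h) -> 'I_((k+h) %/ r)) (x : 'rV[F]_k) (c : coord k r h) : F :=
  match c with
  | inl i => sym Hc x i
  | inr l => \sum_(i < k+h | g i == l) sym Hc x i
  end.

Definition is_partition_r (k r h : nat) (g : 'I_(k+h) -> 'I_((k+h) %/ r)) :=
  forall l, #|[set i | g i == l]| = r.

Definition local_group (k r h : nat) (g : 'I_(k+h) -> 'I_((k+h) %/ r))
  (l : 'I_((k+h) %/ r)) : {set coord k r h} :=
  [set c | match c with inl i => g i == l | inr l' => l' == l end].

Definition punct_weight (F : finFieldType) (k r h : nat) (Hc : 'M[F]_(h,k))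
  (g : 'I_(k+h) -> 'I_((k+h) %/ r)) (E : {set coord k r h}) (x : 'rV[F]_k) : nat :=
  #|[set c | (c \notin E) && (encode Hc g x c != 0)]|.

(* the punctured code (length k+h) is an MDS [k+h,k] code: it has dimension k
   (the encoding restricted to the remaining coordinates is injective) and
   minimum distance exactly h+1 *)
Definition punct_MDS (F : finFieldType) (k r h : nat) (Hc : 'M[F]_(h,k))
  (g : 'I_(k+h) -> 'I_((k+h) %/ r)) (E : {set coord k r h}) : Prop :=
  (forall x y : 'rV[F]_k,
     (forall c, c \notin E -> encode Hc g x c = encode Hc g y c) -> x = y) /\
  (forall x : 'rV[F]_k, x != 0 -> (h.+1 <= punct_weight Hc g E x)%N) /\
  (exists2 x : 'rV[F]_k, x != 0 & punct_weight Hc g E x = h.+1).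

Definition maximally_recoverable (F : finFieldType) (k r h : nat)
  (Hc : 'M[F]_(h,k)) (g : 'I_(k+h) -> 'I_((k+h) %/ r)) : Prop :=
  forall E : {set coord k r h},
    (forall l, #|E :&: local_group g l| = 1%N) -> punct_MDS Hc g E.

From Pilot Require Import Defs.
From HB Require Import structures.
From mathcomp Require Import all_boot all_order all_algebra.
From mathcomp Require Import zify.
Set Implicit Arguments. Unset Strict Implicit. Unset Printing Implicit Defensive.
Import GRing.Theory.
Local Open Scope ring_scope.

(* Puncture every local parity.  What remains is the systematic code with
   generator [1 | Hc^T], which must be MDS with distance h+1.  A nonzero
   message whose heavy parities vanish on a set Z of rows then has more than
   #|Z| nonzero entries.  With #|Z| = 1 this forces every entry of Hc to be
   nonzero, with #|Z| = 2 every 2x2 minor of two fixed rows j1, j2.  Hence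
   the k ratios Hc j1 a / Hc j2 a are distinct and nonzero, and together
   with 0 they give k+1 elements of F. *)

Section PuncturedLocalParities.
Variables (F : finFieldType) (k r h : nat).
Variables (Hc : 'M[F]_(h,k)) (g : 'I_(k+h) -> 'I_((k+h) %/ r)).

Definition local_parities : {set Defs.coord k r h} :=
  [set c | if c is inr _ then true else false].

Lemma local_parities_transversal l :
  #|local_parities :&: local_group g l| = 1%N.
Proof.
suff -> : local_parities :&: local_group g l = [set inr l] by rewrite cards1.
by apply/setP => -[i|l']; rewrite !inE.
Qed.

Definition msg_support (x : 'rV[F]_k) : {set 'I_k} := [set a | x 0 a != 0].

Definition heavy_support (x : 'rV[F]_k) : {set 'I_h} :=
  [set j | (x *m Hc^T) 0 j != 0].

Lemma sym_lshift x a : sym Hc x (lshift h a) = x 0 a.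
Proof. by rewrite /sym (unsplitK (inl _ a)). Qed.

Lemma sym_rshift x j : sym Hc x (rshift k j) = (x *m Hc^T) 0 j.
Proof.
rewrite /sym (unsplitK (inr _ j)) mxE.
by apply: eq_bigr => a _; rewrite mxE mulrC.
Qed.

Lemma punct_weight_local_parities x :
  punct_weight Hc g local_parities x = (#|msg_support x| + #|heavy_support x|)%N.
Proof.
rewrite /punct_weight -sum1_card big_mkcond big_sumType /=.
rewrite [X in (_ + X)%N]big1 ?addn0; last by move=> l _; rewrite !inE.
rewrite big_split_ord /= -!sum1_card.
by congr (_ + _)%N; rewrite [RHS]big_mkcond; apply: eq_bigr => i _;
  rewrite !inE /= ?sym_lshift ?sym_rshift.
Qed.

Hypothesis MR : maximally_recoverable Hc g.

Lemma vanishing_heavies_lt_support x (Z : {set 'I_h}) :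
  x != 0 -> {in Z, forall j, (x *m Hc^T) 0 j = 0} ->
  (#|Z| < #|msg_support x|)%N.
Proof.
move=> nz_x Z0.
have [_ [MDS _]] := @MR _ local_parities_transversal.
have := MDS x nz_x; rewrite punct_weight_local_parities.
have : heavy_support x \subset ~: Z.
  by apply/subsetP => j; rewrite !inE; apply: contra => /Z0 ->.
move/subset_leq_card; have := cardsC Z; rewrite card_ord; lia.
Qed.

Lemma heavy_coef_neq0 j a : Hc j a != 0.
Proof.
apply/negP => /eqP Hja.
have : (#|[set j]| < #|msg_support 'e_a|)%N.
  apply: vanishing_heavies_lt_support => [|j']; last first.
    by rewrite inE => /eqP ->; rewrite -rowE !mxE.
  by apply/negP => /eqP/matrixP/(_ 0 a); rewrite !mxE !eqxx => /eqP; rewrite oner_eq0.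
have : msg_support 'e_a \subset [set a].
  by apply/subsetP => b; rewrite !inE mxE eqxx; case: (b == a); rewrite ?eqxx.
by move/subset_leq_card; rewrite !cards1; lia.
Qed.

Lemma heavy_minor_neq0 (j1 j2 : 'I_h) a b : j1 != j2 -> a != b ->
  Hc j1 a * Hc j2 b - Hc j1 b * Hc j2 a != 0.
Proof.
move=> nj12 nab; apply/negP => /eqP minor0.
pose x : 'rV[F]_k := Hc j2 b *: 'e_a - Hc j2 a *: 'e_b.
have heavy_x j : (x *m Hc^T) 0 j = Hc j2 b * Hc j a - Hc j2 a * Hc j b.
  by rewrite mulmxBl -!scalemxAl -!rowE !mxE.
have : (#|[set j1; j2]| < #|msg_support x|)%N.
  apply: vanishing_heavies_lt_support => [|j]; last first.
    rewrite !inE heavy_x => /orP[] /eqP ->; last by rewrite mulrC subrr.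
    by rewrite mulrC [Hc j2 a * _]mulrC minor0.
  apply/negP => /eqP/matrixP/(_ 0 a); rewrite !mxE !eqxx (negbTE nab) /=.
  by rewrite mulr1 mulr0 subr0 => /eqP; rewrite (negbTE (heavy_coef_neq0 _ _)).
have : msg_support x \subset [set a; b].
  apply/subsetP => c; rewrite !inE !mxE; apply: contraR => /norP[/negbTE-> /negbTE->].
  by rewrite !andbF !mulr0 subr0.
move/subset_leq_card; rewrite !cards2 nj12 (negbTE nab) /=; lia.
Qed.

End PuncturedLocalParities.

Theorem theorem19 (F : finFieldType) (k r h : nat)
  (Hc : 'M[F]_(h,k)) (g : 'I_(k+h) -> 'I_((k+h) %/ r)) :
  (0 < k)%N -> (0 < r)%N -> (0 < h)%N -> (r %| k + h)%N -> (2 <= h)%N ->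
  is_partition_r g ->
  maximally_recoverable Hc g ->
  (k.+1 <= #|F|)%N.
Proof.
move=> _ _ h_gt0 _ h_gt1 _ MR.
pose j1 : 'I_h := Ordinal h_gt0; pose j2 : 'I_h := Ordinal h_gt1.
have nz := heavy_coef_neq0 MR.
have ratio_neq0 a : Hc j1 a / Hc j2 a != 0 by rewrite mulf_neq0 ?invr_eq0.
pose f (o : option 'I_k) : F := if o is Some a then Hc j1 a / Hc j2 a else 0.
have f_inj : injective f.
  case=> [a|] [b|] //=; last 2 first.
  - by move=> ratio0; move: (ratio_neq0 a); rewrite ratio0 eqxx.
  - by move=> ratio0; move: (ratio_neq0 b); rewrite -ratio0 eqxx.
  move/eqP; rewrite eqr_div // => /eqP minor0.
  case: (eqVneq a b) => [-> // | nab].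
  by have := heavy_minor_neq0 MR (isT : j1 != j2) nab; rewrite minor0 subrr eqxx.
by have := leq_card f f_inj; rewrite card_option card_ord.
Qed.
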